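(* For every real number $k>0$ and all integers $0<m_1<m_2<\cdots<m_n$, the $n\times n$ matrix $M=\big((k+i)^{m_j}-(k+i-1)^{m_j}\big)_{i,j=1}^n$ has positive determinant. *)

From mathcomp Require Import all_boot all_order all_algebra.
From mathcomp Require Import reals.
Set Implicit Arguments. Unset Strict Implicit. Unset Printing Implicit Defensive.

From mathcomp Require Import all_boot all_order all_algebra.
From mathcomp Require Import reals polyrcf zify.
Set Implicit Arguments.
Unset Strict Implicit.
Unset Printing Implicit Defensive.

Import Order.TTheory GRing.Theory Num.Theory.
Local Open Scope ring_scope.

(* With x_i = k + i (0 <= i <= n) and exponents 0 < m_1 < ... < m_n, the
   matrix is what remains of the generalized Vandermonde matrix (x_i ^ e_j),
   e_0 = 0, after subtracting from each row the previous one and expanding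
   along the column of ones.  A generalized Vandermonde matrix with increasing
   positive nodes and increasing exponents has positive determinant, by
   induction: expanded along its last row, the determinant is a fewnomial in
   the last node, with positive leading coefficient (the smaller determinant),
   vanishing at the other n nodes.  Were it nonpositive at x_n, it would have
   one more root beyond x_n; but a fewnomial with n + 1 monomials has at most
   n positive roots, since dividing by its lowest power of X and
   differentiating removes a monomial and, by Rolle, at most one root. *)

Section Fewnomials.
Variable R : rcfType.

Definition fewnomial s (c : 'I_s -> R) (e : 'I_s -> nat) : {poly R} :=
  \sum_(j < s) c j *: 'X^(e j).

Lemma fewnomial_shift s (c : 'I_s.+1 -> R) (e : 'I_s.+1 -> nat) :
  (forall j, e ord0 <= e j)%N ->
  fewnomial c e = 'X^(e ord0) * fewnomial c (fun j => (e j - e ord0)%N).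
Proof.
move=> e0_min; rewrite /fewnomial mulr_sumr; apply: eq_bigr => j _.
by rewrite -scalerAr -exprD subnKC.
Qed.

Lemma deriv_fewnomial s (c : 'I_s.+1 -> R) (e : 'I_s.+1 -> nat) :
  e ord0 = 0%N ->
  (fewnomial c e)^`() = fewnomial (fun j => c (lift ord0 j) *+ e (lift ord0 j))
                                  (fun j => (e (lift ord0 j)).-1).
Proof.
move=> e0; rewrite /fewnomial raddf_sum big_ord_recl /= derivZ e0 derivXn.
rewrite mulr0n scaler0 add0r; apply: eq_bigr => j _.
by rewrite derivZ derivXn -scalerMnr scalerMnl.
Qed.

Lemma lead_coef_fewnomial s (c : 'I_s.+1 -> R) (e : 'I_s.+1 -> nat) :
  {homo e : i j / (i < j)%N} -> c ord_max != 0 ->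
  lead_coef (fewnomial c e) = c ord_max.
Proof.
move=> e_incr c_neq0; rewrite /fewnomial big_ord_recr /= addrC lead_coefDl.
  by rewrite lead_coefZ lead_coefXn mulr1.
rewrite size_scale // size_polyXn ltnS.
apply: leq_trans (size_sum _ _ _) _; apply/bigmax_leqP => j _.
by apply: leq_trans (size_scale_leq _ _) _; rewrite size_polyXn e_incr /=.
Qed.

Lemma rolle_increasing_roots s (p : {poly R}) (r : 'I_s.+1 -> R) :
  {homo r : i j / (i < j)%N >-> i < j} -> (forall i, root p (r i)) ->
  exists z : 'I_s -> R, [/\ {homo z : i j / (i < j)%N >-> i < j},
    (forall j, r (lift ord_max j) < z j) & (forall j, root p^`() (z j))].
Proof.
move=> r_incr r_root.
have z_exists j :
    exists y, r (lift ord_max j) < y < r (lift ord0 j) /\ root p^`() y.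
  have r_lt : r (lift ord_max j) < r (lift ord0 j).
    by apply: r_incr; rewrite lift_max lift0.
  have [y y_in dp_y] :=
    poly_rolle r_lt (etrans (eqP (r_root _)) (esym (eqP (r_root _)))).
  by exists y; split; [rewrite in_itv in y_in | exact/eqP].
have [z z_between] := fin_all_exists z_exists.
have r_le : {homo r : i j / (i <= j)%N >-> i <= j}.
  by move=> i j; rewrite leq_eqVlt => /orP[/eqP/val_inj-> // | /r_incr/ltW].
exists z; split => [i j ij | j | j]; last by case: (z_between j).
- have [/andP[_ zi_lt] _] := z_between i; have [/andP[zj_gt _] _] := z_between j.
  apply: lt_trans zi_lt (le_lt_trans _ zj_gt); apply: r_le.
  by rewrite lift0 lift_max.
- by have [/andP[]] := z_between j.
Qed.

Lemma fewnomial_coef_eq0 s (c : 'I_s -> R) (e : 'I_s -> nat) (r : 'I_s -> R) :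
  {homo e : i j / (i < j)%N} -> {homo r : i j / (i < j)%N >-> i < j} ->
  (forall i, 0 < r i) -> (forall i, root (fewnomial c e) (r i)) ->
  forall j, c j = 0.
Proof.
elim: s => [|s IH] in c e r * => e_incr r_incr r_gt0 r_root; first by case.
have e0_min j : (e ord0 <= e j)%N.
  by case: (unliftP ord0 j) => [j'|] ->; [apply/ltnW/e_incr; rewrite lift0|].
pose q := fewnomial c (fun j => (e j - e ord0)%N).
have q_root i : root q (r i).
  move: (r_root i); rewrite (fewnomial_shift c e0_min) rootM /root hornerXn.
  by rewrite expf_eq0 (gt_eqF (r_gt0 i)) andbF.
have [z [z_incr r_lt_z z_root]] := rolle_increasing_roots r_incr q_root.
have c_lift0 j : c (lift ord0 j) = 0.
  have e_lift0 i : (e ord0 < e (lift ord0 i))%N by apply: e_incr; rewrite lift0.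
  suff /eqP : c (lift ord0 j) *+ (e (lift ord0 j) - e ord0) = 0.
    by rewrite mulrn_eq0 subn_eq0 leqNgt e_lift0 => /eqP.
  apply: (IH (fun i => c (lift ord0 i) *+ (e (lift ord0 i) - e ord0))
             (fun i => (e (lift ord0 i) - e ord0).-1) z)
    => [a b ab | a b ab | a | a].
  - have: (e (lift ord0 a) < e (lift ord0 b))%N by apply: e_incr; rewrite !lift0.
    by have := e_lift0 a; lia.
  - exact: z_incr.
  - exact: lt_trans (r_gt0 _) (r_lt_z a).
  - by move: (z_root a); rewrite /q deriv_fewnomial ?subnn.
move=> j; case: (unliftP ord0 j) => [j'|] ->; first exact: c_lift0.
move: (q_root ord0); rewrite /root /q /fewnomial big_ord_recl big1 => [|i _].
  by rewrite subnn addr0 hornerZ hornerXn expr0 mulr1 => /eqP.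
by rewrite c_lift0 scale0r.
Qed.

End Fewnomials.

Section GeneralizedVandermonde.
Variable R : rcfType.

Definition gvandermonde n (x : 'I_n -> R) (e : 'I_n -> nat) : 'M[R]_n :=
  \matrix_(i, j) x i ^+ e j.

Lemma det_gvandermonde_set_max n (x : 'I_n.+1 -> R) (e : 'I_n.+1 -> nat) t :
  \det (gvandermonde [eta x with ord_max |-> t] e) =
  (fewnomial (cofactor (gvandermonde x e) ord_max) e).[t].
Proof.
rewrite (expand_det_row _ ord_max) /fewnomial horner_sum; apply: eq_bigr => j _.
rewrite hornerZ hornerXn !mxE /= eqxx mulrC; congr (_ * _).
rewrite /cofactor; congr (_ * \det _); apply/matrixP => a b.
by rewrite !mxE /= eq_sym (negbTE (neq_lift ord_max a)).
Qed.

Lemma cofactor_gvandermonde_max n (x : 'I_n.+1 -> R) (e : 'I_n.+1 -> nat) :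
  cofactor (gvandermonde x e) ord_max ord_max =
  \det (gvandermonde (x \o lift ord_max) (e \o lift ord_max)).
Proof.
rewrite /cofactor /= -signr_odd addnn odd_double expr0 mul1r.
by congr (\det _); apply/matrixP => a b; rewrite !mxE.
Qed.

Lemma root_ge_of_lead_coef_gt0 (p : {poly R}) a :
  0 < lead_coef p -> p.[a] <= 0 -> exists2 z, a <= z & root p z.
Proof.
move=> lc_gt0 pa_le0; have [N pN] := poly_pinfty_gt_lc lc_gt0.
have a_le : a <= Num.max a N by rewrite le_max lexx.
have pmax_gt0 : 0 < p.[Num.max a N].
  by apply: lt_le_trans lc_gt0 (pN _ _); rewrite le_max lexx orbT.
have [z /andP[az _] pz] :=
  poly_ivt a_le (introT andP (conj pa_le0 (ltW pmax_gt0))).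
by exists z.
Qed.

Lemma det_gvandermonde_gt0 n (x : 'I_n -> R) (e : 'I_n -> nat) :
  {homo x : i j / (i < j)%N >-> i < j} -> (forall i, 0 < x i) ->
  {homo e : i j / (i < j)%N} -> 0 < \det (gvandermonde x e).
Proof.
elim: n => [|n IH] in x e * => x_incr x_gt0 e_incr; first by rewrite det_mx00.
set c := cofactor (gvandermonde x e) ord_max.
have c_max_gt0 : 0 < c ord_max.
  rewrite /c cofactor_gvandermonde_max.
  by apply: IH => [i j ij | i | i j ij]; rewrite /= ?x_incr ?e_incr ?lift_max.
have det_x : \det (gvandermonde x e) = (fewnomial c e).[x ord_max].
  rewrite -det_gvandermonde_set_max; congr (\det _).
  by apply/matrixP => i j; rewrite !mxE /=; case: eqP => [->|].
rewrite det_x ltNge; apply/negP => p_le0.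
have [|z xz pz] := root_ge_of_lead_coef_gt0 _ p_le0.
  by rewrite lead_coef_fewnomial ?gt_eqF.
suff: c ord_max = 0 by move/eqP; rewrite gt_eqF.
pose r := [eta x with ord_max |-> z].
apply: (fewnomial_coef_eq0 e_incr (r := r)) => [i j ij | i | i] /=.
- have i_max : (i == ord_max) = false.
    by apply/negbTE; rewrite -val_eqE /= neq_ltn (leq_trans ij (leq_ord j)).
  rewrite i_max; case: eqP => [j_max | _]; last exact: x_incr.
  by apply: lt_le_trans xz; apply: x_incr; rewrite -j_max.
- by case: eqP => _; [exact: lt_le_trans (x_gt0 ord_max) xz | exact: x_gt0].
- case: eqP => [_ // | /eqP i_max]; apply/eqP.
  rewrite -det_gvandermonde_set_max; apply: (determinant_alternate i_max).
  by move=> j; rewrite !mxE /= eqxx (negbTE i_max).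
Qed.

End GeneralizedVandermonde.

Lemma det_row_differences (R : comNzRingType) n (A : 'M[R]_n.+1) :
  (forall i, A i ord0 = 1) ->
  \det A = \det (\matrix_(i, j) (A (lift ord0 i) (lift ord0 j)
                                 - A (lift ord_max i) (lift ord0 j))).
Proof.
move=> A_col0.
pose L : 'M[R]_n.+1 := \matrix_(i, l) ((i == l)%:R - (i == l.+1 :> nat)%:R).
have det_L : \det L = 1.
  rewrite det_trig; first by rewrite big1 // => i _; rewrite mxE eqxx ltn_eqF ?subr0.
  apply/is_trig_mxP => i l il; rewrite mxE -val_eqE /= !ltn_eqF ?subrr //.
  exact: ltn_trans il _.
have sum_delta (i : 'I_n.+1) (F : 'I_n.+1 -> R) : \sum_l (i == l)%:R * F l = F i.
  rewrite (bigD1 i) //= eqxx mul1r big1 ?addr0 // => l.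
  by rewrite eq_sym => /negbTE->; rewrite mul0r.
have LA i j : (L *m A) i j = A i j - \sum_(l < n.+1) (i == l.+1 :> nat)%:R * A l j.
  rewrite mxE -(sum_delta i (A^~ j)) -sumrB.
  by apply: eq_bigr => l _; rewrite mxE mulrBl.
have LA_lift i j :
    (L *m A) (lift ord0 i) j = A (lift ord0 i) j - A (lift ord_max i) j.
  rewrite LA -(sum_delta (lift ord_max i) (A^~ j)); congr (_ - _).
  by apply: eq_bigr => l _; rewrite lift0 eqSS -(lift_max i).
rewrite -[LHS]mul1r -det_L -det_mulmx (expand_det_col _ ord0) big_ord_recl big1.
  rewrite addr0 LA big1 => [|l _]; last by rewrite mul0r.
  rewrite subr0 A_col0 mul1r /cofactor /= expr0 mul1r.
  congr (\det _); apply/matrixP => i j.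
  by rewrite [LHS]mxE [LHS]mxE LA_lift mxE.
by move=> i _; rewrite LA_lift !A_col0 subrr mul0r.
Qed.

Theorem claim4 (R : realType) (n : nat) (k : R) (m : 'I_n -> nat)
  (hk : 0 < k)
  (hm0 : forall j : 'I_n, (0 < m j)%N)
  (hminc : forall i j : 'I_n, (i < j)%N -> (m i < m j)%N) :
  0 < \det (\matrix_(i < n, j < n)
              ((k + (i.+1)%:R) ^+ m j - (k + i%:R) ^+ m j)).
Proof.
pose x (i : 'I_n.+1) : R := k + i%:R.
pose e (j : 'I_n.+1) : nat := oapp m 0%N (unlift ord0 j).
have x_incr : {homo x : i j / (i < j)%N >-> i < j}.
  by move=> i j ij; rewrite /x ltrD2l ltr_nat.
have x_gt0 i : 0 < x i by rewrite /x ltr_wpDr.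
have e_incr : {homo e : i j / (i < j)%N}.
  move=> i j; rewrite /e.
  case: (unliftP ord0 j) => [j'|] ->; last by rewrite ltn0.
  case: (unliftP ord0 i) => [i'|] ->; last by move=> _; apply: hm0.
  by rewrite !lift0 ltnS; apply: hminc.
have := det_gvandermonde_gt0 x_incr x_gt0 e_incr.
rewrite det_row_differences => [|i]; last by rewrite mxE /e unlift_none expr0.
congr (0 < \det _); apply/matrixP => i j.
by rewrite !mxE /x /e liftK lift0 lift_max.
Qed.
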